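(* Let $g^*(\mathbf{z})=\sum_{\beta\in\mathbb{N}^n}g^*_\beta\mathbf{z}^\beta\in\mathbb{R}[\mathbf{z}]$, $\Gamma=\{\beta: g^*_\beta\neq0\}$, $r=|\Gamma|$, let $N$ be an integer with $N>\max_{1\le i\le n}\max\{\beta_i:\beta\in\Gamma\}$, and let $\varphi=(e^{2i\pi/N},\ldots,e^{2i\pi/N})\in\mathbb{T}^n$. There is a constant $C>0$ depending only on $r$ such that if $\mathfrak{d}\ge C\,\mathcal{E}(\{\varphi^\beta:\beta\in\Gamma\})$, then the linear program $$\min_{\mathbf{x}\in\mathbb{R}^{\{0,\ldots,N-1\}^n}}\Big\{\sum_{\beta}|x_\beta| : \sum_{\beta\in\{0,\ldots,N-1\}^n}\mathbf{A}(\alpha,\beta)\,x_\beta=b_\alpha\ \ \forall\alpha\in\mathscr{A}_{\mathfrak{d}}\Big\},$$ with $\mathbf{A}(\alpha,\beta)=(\varphi^\beta)^\alpha=\prod_{i=1}^n\varphi_i^{\beta_i\alpha_i}$ and $b_\alpha=g^*(\varphi^\alpha)$, has a unique optimal solution, namely the vector $(g^*_\beta)_{\beta\in\{0,\ldots,N-1\}^n}$ of coefficients of $g^*$.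
   Context: $\mathbb{T}^n=\{\mathbf{z}\in\mathbb{C}^n: |z_i|=1\ \forall i\}$; for $\alpha\in\mathbb{Z}^n$, $\mathbf{z}^\alpha=z_1^{\alpha_1}\cdots z_n^{\alpha_n}$. $\mathscr{A}_{\mathfrak{d}}=\{\alpha\in\mathbb{Z}^n:\max_i|\alpha_i|\le\mathfrak{d}\}$. For $d\in\mathbb{N}$, $\mathbb{A}_d$ is the complex space of Laurent polynomials $\sum_{\alpha\in\mathbb{Z}^n,\ \sum_i|\alpha_i|\le d}c_\alpha\mathbf{z}^\alpha$. For a set $\Xi$ of $r$ distinct points of $\mathbb{T}^n$, a family of interpolation polynomials is $u_1,\ldots,u_r\in\mathbb{A}_{r-1}$ with $u_i(\xi_j)=\delta_{ij}$, and $\mathcal{E}(\Xi)$ is the lowest value of $\max_i\max_{\mathbf{z}\in\mathbb{T}^n}|u_i(\mathbf{z})|^2$ over all such families. *)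

From HB Require Import structures.
From mathcomp Require Import all_boot all_order all_algebra.
From mathcomp Require Import all_classical all_reals all_analysis.
From mathcomp Require Import complex.
Set Implicit Arguments. Unset Strict Implicit. Unset Printing Implicit Defensive.
Import Order.TTheory GRing.Theory Num.Theory.
Local Open Scope ring_scope.
Local Open Scope classical_set_scope.

Section Defs.
Variable R : realType.
Notation C := (R[i]).

Definition cabs (z : C) : R := mathcomp.real_closed.complex.ComplexField.Normc.normc z.

Definition torus (n : nat) : set ('I_n -> C) :=
  [set z | forall i, cabs (z i) = 1].

Definition lmono (n : nat) (z : 'I_n -> C) (alpha : 'I_n -> int) : C :=
  \prod_(i < n) (z i) ^ (alpha i).

(* exponents alpha in Z^n with max_i |alpha_i| <= d, encoded as the box
   {0..2d}^n shifted by -d *)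
Definition lexp (n d : nat) := {ffun 'I_n -> 'I_(2 * d).+1}.
Definition lexp_val (n d : nat) (k : lexp n d) : 'I_n -> int :=
  fun i => (val (k i))%:Z - d%:Z.

Definition l1deg (n : nat) (alpha : 'I_n -> int) : nat :=
  \sum_(i < n) `|alpha i|%N.

(* An element of A_d is given by complex coefficients c_alpha for the
   exponents alpha with sum_i |alpha_i| <= d (all such alpha lie in the
   box lexp n d); its value at z is sum c_alpha z^alpha. *)
Definition lpoly (n d : nat) := lexp n d -> C.
Definition lpoly_eval (n d : nat) (u : lpoly n d) (z : 'I_n -> C) : C :=
  \sum_(k : lexp n d | (l1deg (lexp_val k) <= d)%N)
     u k * lmono z (lexp_val k).

Definition torus_max2 (n d : nat) (u : lpoly n d) : R :=
  sup [set (cabs (lpoly_eval u z)) ^+ 2 | z in @torus n].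

Definition interpE (n r : nat) (xi : 'I_r -> ('I_n -> C)) : R :=
  inf [set M | exists u : 'I_r -> lpoly n r.-1,
         (forall i j, lpoly_eval (u i) (xi j) = (i == j)%:R) /\
         M = \big[Num.max/0]_(i < r) torus_max2 (u i)].

Definition omegaN (N : nat) : C :=
  Complex (cos (2 * pi / N%:R)) (sin (2 * pi / N%:R)).

Definition phipow (n N : nat) (beta : 'I_n -> nat) : 'I_n -> C :=
  fun i => omegaN N ^+ beta i.

Definition phipowz (n N : nat) (alpha : 'I_n -> int) : 'I_n -> C :=
  fun i => omegaN N ^ alpha i.

(* A polynomial g in R[z_1..z_n] is given by its coefficient function
   g : N^n -> R together with a duplicate-free list Gamma that is exactly
   its support.  Its evaluation at a complex point: *)
Definition rpoly_eval (n : nat) (Gamma : seq {ffun 'I_n -> nat})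
    (g : {ffun 'I_n -> nat} -> R) (z : 'I_n -> C) : C :=
  \sum_(beta <- Gamma) real_complex R (g beta) * \prod_(i < n) (z i) ^+ beta i.

Definition LPmat (n N : nat) (alpha : 'I_n -> int)
    (beta : {ffun 'I_n -> 'I_N}) : C :=
  \prod_(i < n) omegaN N ^ ((val (beta i))%:Z * alpha i).

Definition LPfeasible (n N d : nat) (b : ('I_n -> int) -> C)
    (x : {ffun 'I_n -> 'I_N} -> R) : Prop :=
  forall alpha : 'I_n -> int, (forall i, `|alpha i| <= d%:Z) ->
    \sum_(beta : {ffun 'I_n -> 'I_N}) LPmat alpha beta * real_complex R (x beta)
      = b alpha.

Definition l1norm (n N : nat) (x : {ffun 'I_n -> 'I_N} -> R) : R :=
  \sum_(beta : {ffun 'I_n -> 'I_N}) `|x beta|.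

Definition LPunique_opt (n N d : nat) (b : ('I_n -> int) -> C)
    (x0 : {ffun 'I_n -> 'I_N} -> R) : Prop :=
  LPfeasible d b x0 /\
  forall x, LPfeasible d b x -> x <> x0 -> l1norm x0 < l1norm x.

Definition coef_box (n N : nat) (g : {ffun 'I_n -> nat} -> R)
    (beta : {ffun 'I_n -> 'I_N}) : R :=
  g [ffun i => val (beta i)].

End Defs.

(* Exact recovery follows from a dual certificate: a real function F on the torus that is a
   Laurent polynomial of degree at most d, equals sign (g_beta) at the nodes phi^beta of the
   support and has |F| < 1 at every other node of the grid.  Given interpolation polynomials
   u_j of degree r - 1 with |u_j|^2 <= E + 1 on the torus, take m > r (E + 1) and
     F = (sum_j s_j |u_j|^2) (1 + (1 - sum_j |u_j|^2) / m)^m (1 - eps prod_j |z - phi^beta_j|^2).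
   By AM-GM, x (1 + (1 - x) / m)^m <= 1, so the first two factors have modulus at most 1,
   while the last one is 1 on the support and smaller elsewhere; the degree of F is
   2 (r - 1) (m + 1) + 2 r = O (r^2 E).  The Lagrange polynomials, of degree r - 1, show that
   the columns of the support are independent, which turns the strict inequality off the
   support into uniqueness. *)

From HB Require Import structures.
From mathcomp Require Import all_boot all_order all_algebra.
From mathcomp Require Import all_classical all_reals all_analysis.
From mathcomp Require Import complex.
From mathcomp Require Import ring lra zify.
Import Order.TTheory GRing.Theory Num.Theory.
Local Open Scope ring_scope.
Local Open Scope complex_scope.
Set Implicit Arguments. Unset Strict Implicit. Unset Printing Implicit Defensive.

Section ComplexModulus.
Variable R : realType.
Local Notation C := R[i].

Lemma cabs_ge0 (x : C) : 0 <= cabs x.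
Proof. by case: x => a b; rewrite /cabs /= sqrtr_ge0. Qed.

Lemma cabs0 : cabs (0 : C) = 0. Proof. exact: Normc.normc0. Qed.

Lemma cabs1 : cabs (1 : C) = 1. Proof. exact: Normc.normc1. Qed.

Lemma cabs_eq0 (x : C) : (cabs x == 0) = (x == 0).
Proof. by apply/eqP/eqP => [/Normc.eq0_normc|->]; last exact: cabs0. Qed.

Lemma cabsM (x y : C) : cabs (x * y) = cabs x * cabs y.
Proof. exact: Normc.normcM. Qed.

Lemma cabsV (x : C) : cabs x^-1 = (cabs x)^-1. Proof. exact: Normc.normcV. Qed.

Lemma cabsN (x : C) : cabs (- x) = cabs x. Proof. exact: normcN. Qed.

Lemma cabsD (x y : C) : cabs (x + y) <= cabs x + cabs y.
Proof. exact: le_normcD. Qed.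

Lemma cabs_sum I (s : seq I) (P : pred I) (F : I -> C) :
  cabs (\sum_(i <- s | P i) F i) <= \sum_(i <- s | P i) cabs (F i).
Proof.
elim/big_rec2: _ => [|i a b _ hb]; first by rewrite cabs0.
exact: le_trans (cabsD _ _) (lerD _ hb).
Qed.

Lemma mul_conjc (x : C) : x * x^* = (cabs x ^+ 2)%:C.
Proof.
case: x => a b; rewrite /cabs /= sqr_sqrtr ?addr_ge0 ?sqr_ge0 //.
by apply/eqP; rewrite eq_complex /= mulrN opprK -!expr2 mulrN mulrC addNr !eqxx.
Qed.

Lemma torus_neq0 n (z : 'I_n -> C) i : torus z -> z i != 0.
Proof. by move=> tz; rewrite -cabs_eq0 tz oner_neq0. Qed.

Lemma torus_conj n (z : 'I_n -> C) i : torus z -> (z i)^* = (z i)^-1.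
Proof.
move=> tz; apply: (mulfI (torus_neq0 i tz)).
by rewrite mul_conjc tz expr1n divff ?torus_neq0.
Qed.

Lemma cabs_lmono n (z : 'I_n -> C) a : torus z -> cabs (lmono z a) = 1.
Proof.
move=> tz; rewrite /lmono; elim/big_rec: _ => [|i x _ hx]; first exact: cabs1.
rewrite cabsM hx mulr1.
have cabsX k : cabs (z i ^+ k) = 1.
  by elim: k => [|k IH]; rewrite ?expr0 ?cabs1 // exprS cabsM tz IH mul1r.
case: (a i) => k; first exact: cabsX.
by change (cabs ((z i ^+ k.+1)^-1) = 1); rewrite cabsV cabsX invr1.
Qed.

End ComplexModulus.

Section LaurentMonomials.
Variables (R : realType) (n : nat).
Local Notation C := R[i].
Implicit Types (z : 'I_n -> C) (a b : 'I_n -> int).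

Definition unit_exp (i : 'I_n) : 'I_n -> int := fun j => (j == i)%:Z.

Lemma lmono0 z : lmono z (fun _ => 0) = 1.
Proof. by rewrite /lmono big1 // => i _; rewrite expr0z. Qed.

Lemma lmono_unit_exp z i : lmono z (unit_exp i) = z i.
Proof.
rewrite /lmono (bigD1 i) //= big1 ?mulr1 /unit_exp ?eqxx // => j /negbTE ->.
exact: expr0z.
Qed.

Lemma lmonoD z a b : torus z -> lmono z (fun i => a i + b i) = lmono z a * lmono z b.
Proof.
move=> tz; rewrite /lmono -big_split; apply: eq_bigr => i _ /=.
by rewrite exprzDr // unitfE torus_neq0.
Qed.

Lemma lmonoN z a : torus z -> lmono z (fun i => - a i) = (lmono z a)^*.
Proof.
move=> tz; rewrite /lmono rmorph_prod; apply: eq_bigr => i _ /=.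
by rewrite fmorphXz /= torus_conj // exprz_inv.
Qed.

Lemma l1deg0 : l1deg (fun _ : 'I_n => 0) = 0%N.
Proof. by rewrite /l1deg big1. Qed.

Lemma l1deg_unit_exp i : l1deg (unit_exp i) = 1%N.
Proof.
by rewrite /l1deg (bigD1 i) //= big1 ?addn0 /unit_exp ?eqxx // => j /negbTE ->.
Qed.

Lemma l1degD a b : (l1deg (fun i => (a i + b i)%R) <= l1deg a + l1deg b)%N.
Proof.
rewrite /l1deg -big_split /=; apply: leq_sum => i _.
by rewrite -(@ler_nat int) natrD !natr_absz !intz ler_normD.
Qed.

Lemma l1degN a : l1deg (fun i => - a i) = l1deg a.
Proof. by apply: eq_bigr => i _; rewrite abszN. Qed.

Lemma absz_le_l1deg a i : (`|a i| <= l1deg a)%N.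
Proof. by rewrite /l1deg (bigD1 i) //= leq_addr. Qed.

End LaurentMonomials.

Section LaurentPolynomials.
Variables (R : realType) (n : nat).
Local Notation C := R[i].
Local Notation point := ('I_n -> C).
Implicit Types (f g : point -> C) (D : nat).

(* Only agreement on the torus is required: there [conj z = z^-1], so conjugates of Laurent
   polynomials are again Laurent polynomials. *)
Definition laurent D f :=
  exists2 L : seq (C * ('I_n -> int)), all (fun p => l1deg p.2 <= D)%N L &
    forall z, torus z -> f z = \sum_(p <- L) p.1 * lmono z p.2.

Lemma laurentW D D' f : (D <= D')%N -> laurent D f -> laurent D' f.
Proof.
move=> DD' [L hL fL]; exists L => //.
by apply: sub_all hL => p /= /leq_trans; apply.
Qed.

Lemma eq_laurent D f g : (forall z, torus z -> f z = g z) -> laurent D f -> laurent D g.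
Proof. by move=> fg [L hL fL]; exists L => // z tz; rewrite -fg ?fL. Qed.

Lemma laurent_cst D (c : C) : laurent D (fun _ => c).
Proof.
by exists [:: (c, fun _ => 0)]; rewrite /= ?l1deg0 // => z _; rewrite big_seq1 lmono0 mulr1.
Qed.

Lemma laurent_coord i : laurent 1 (fun z => z i).
Proof.
exists [:: (1, unit_exp i)]; first by rewrite /= l1deg_unit_exp.
by move=> z _; rewrite big_seq1 mul1r lmono_unit_exp.
Qed.

Lemma laurentD D f g : laurent D f -> laurent D g -> laurent D (fun z => f z + g z).
Proof.
move=> [L hL fL] [M hM gM]; exists (L ++ M); first by rewrite all_cat hL.
by move=> z tz; rewrite big_cat fL ?gM.
Qed.

Lemma laurentM D1 D2 f g :
  laurent D1 f -> laurent D2 g -> laurent (D1 + D2) (fun z => f z * g z).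
Proof.
move=> [L hL fL] [M hM gM].
exists [seq (p.1 * q.1, fun i => p.2 i + q.2 i) | p <- L, q <- M].
  elim: L hL {fL} => [|p L IH] // /andP[hp /IH hL].
  rewrite allpairs_cons all_cat hL andbT all_map; apply: sub_all hM => q /= hq.
  exact: leq_trans (l1degD _ _) (leq_add hp hq).
move=> z tz; rewrite fL ?gM // big_allpairs_dep /= big_distrl.
apply: eq_bigr => p _; rewrite big_distrr; apply: eq_bigr => q _ /=.
by rewrite lmonoD // mulrACA.
Qed.

Lemma laurent_conj D f : laurent D f -> laurent D (fun z => (f z)^*).
Proof.
move=> [L hL fL]; exists [seq (p.1^*, fun i => - p.2 i) | p <- L].
  by rewrite all_map; apply: sub_all hL => p /=; rewrite l1degN.
move=> z tz; rewrite fL // rmorph_sum big_map; apply: eq_bigr => p _ /=.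
by rewrite rmorphM lmonoN.
Qed.

Lemma laurent_sum D I (s : seq I) (P : pred I) (F : I -> point -> C) :
  (forall i, laurent D (F i)) -> laurent D (fun z => \sum_(i <- s | P i) F i z).
Proof.
move=> hF; elim: s => [|i s IH].
  by apply: eq_laurent (laurent_cst D 0) => z _; rewrite big_nil.
apply: eq_laurent (_ : laurent D (fun z => (if P i then F i z else 0) + _)).
  by move=> z _; rewrite big_cons; case: (P i); rewrite ?add0r.
by apply: laurentD IH; case: (P i); [exact: hF | exact: laurent_cst].
Qed.

Lemma laurent_prod D I (s : seq I) (P : pred I) (F : I -> point -> C) :
  (forall i, laurent D (F i)) ->
  laurent (D * count P s) (fun z => \prod_(i <- s | P i) F i z).
Proof.
move=> hF; elim: s => [|i s IH] /=.
  by apply: eq_laurent (laurent_cst _ 1) => z _; rewrite big_nil.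
case Pi: (P i).
  by rewrite mulnS; apply: eq_laurent (laurentM (hF i) IH) => z _; rewrite big_cons Pi.
by rewrite add0n; apply: eq_laurent IH => z _; rewrite big_cons Pi.
Qed.

Lemma laurentX D k f : laurent D f -> laurent (D * k) (fun z => f z ^+ k).
Proof.
move=> hf; elim: k => [|k IH].
  by apply: eq_laurent (laurent_cst _ 1) => z _; rewrite expr0.
by rewrite mulnS; apply: eq_laurent (laurentM hf IH) => z _; rewrite exprS.
Qed.

Lemma laurent_mul_conj D f : laurent D f -> laurent (D + D) (fun z => (cabs (f z) ^+ 2)%:C).
Proof.
move=> hf; apply: eq_laurent (laurentM hf (laurent_conj hf)) => z _.
exact: mul_conjc.
Qed.

End LaurentPolynomials.

Arguments laurent_coord {R n}.
Arguments laurent_cst {R n}.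

Section BoxedLaurentPolynomials.
Variables (R : realType) (n D : nat).
Local Notation C := R[i].

Lemma lexp_val_inj : injective (@lexp_val n D).
Proof.
move=> k1 k2 e; apply/ffunP => i; apply: val_inj.
by have /eqP := congr1 (fun f => f i) e; rewrite /lexp_val (inj_eq (addIr _)) => /eqP [].
Qed.

Lemma lexp_val_surj (a : 'I_n -> int) :
  (l1deg a <= D)%N -> exists k : lexp n D, lexp_val k = a.
Proof.
move=> ha; have hb i : (- D%:Z <= a i <= D%:Z).
  by rewrite -ler_norml -abszE lez_nat (leq_trans (absz_le_l1deg _ _) ha).
exists [ffun i => inord `|(a i + D%:Z)%R|%N]; apply: funext => i.
have [lo hi] : (0 <= a i + D%:Z)%R /\ (a i + D%:Z <= (2 * D)%N%:Z)%R.
  by have := hb i; lia.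
rewrite /lexp_val ffunE -[val _]/(nat_of_ord _) inordK ?gez0_abs ?addrK //.
by rewrite ltnS -lez_nat gez0_abs.
Qed.

Lemma laurent_lpoly_eval (u : lpoly R n D) : laurent D (lpoly_eval u).
Proof.
exists [seq (u k, lexp_val k) | k <- index_enum (lexp n D) & (l1deg (lexp_val k) <= D)%N].
  by rewrite all_map; apply/allP => k; rewrite mem_filter => /andP[].
by move=> z _; rewrite big_map big_filter.
Qed.

Lemma lpoly_eval_single (a : 'I_n -> int) (c : C) z : (l1deg a <= D)%N ->
  lpoly_eval (fun k : lexp n D => if [forall i, a i == lexp_val k i] then c else 0) z
  = c * lmono z a.
Proof.
move=> ha; have [k0 k0a] := lexp_val_surj ha.
have ak k : [forall i, a i == lexp_val k i] = (k == k0).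
  apply/forallP/eqP => [h|-> i]; last by rewrite k0a.
  by apply: lexp_val_inj; apply: funext => i; rewrite k0a; apply/esym/eqP.
rewrite /lpoly_eval (bigD1 k0) /=; last by rewrite k0a.
rewrite ak eqxx k0a big1 ?addr0 // => k /andP[_].
by rewrite ak => /negbTE ->; rewrite mul0r.
Qed.

Lemma laurent_lpoly f : laurent D f ->
  exists u : lpoly R n D, forall z, torus z -> lpoly_eval u z = f z.
Proof.
move=> [L hL fL].
exists (fun k : lexp n D => \sum_(p <- L) if [forall i, p.2 i == lexp_val k i] then p.1 else 0).
move=> z tz; rewrite fL // /lpoly_eval.
under eq_bigr do rewrite big_distrl /=.
rewrite exchange_big /=; elim: L hL {fL} => [|p L IH]; first by rewrite !big_nil.
by move=> /andP[hp /IH {}IH]; rewrite !big_cons -IH -lpoly_eval_single.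
Qed.

End BoxedLaurentPolynomials.

Lemma count_index_enum (T : finType) (P : pred T) : count P (index_enum T) = #|P|.
Proof. by rewrite -sum1_count sum1_card. Qed.

Lemma cabs_lpoly_eval_le (R : realType) n D (u : lpoly R n D) z : torus z ->
  cabs (lpoly_eval u z) <= \sum_k cabs (u k).
Proof.
move=> tz; apply: le_trans (cabs_sum _ _ _) _.
rewrite [leRHS](bigID (fun k : lexp n D => l1deg (lexp_val k) <= D)%N).
rewrite -[leLHS]addr0 lerD ?sumr_ge0 // => [|k _]; last exact: cabs_ge0.
by apply: ler_sum => k _; rewrite cabsM cabs_lmono // mulr1.
Qed.

Lemma torus_max2_ge (R : realType) n D (u : lpoly R n D) z : torus z ->
  cabs (lpoly_eval u z) ^+ 2 <= torus_max2 u.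
Proof.
move=> tz; apply: ub_le_sup; last by exists z.
exists ((\sum_k cabs (u k)) ^+ 2) => _ [y ty <-].
by rewrite lerXn2r ?nnegrE ?cabs_ge0 ?cabs_lpoly_eval_le ?sumr_ge0 // => k; rewrite cabs_ge0.
Qed.

Section Interpolation.
Variables (R : realType) (n r : nat) (xi : 'I_r -> 'I_n -> R[i]).
Local Notation C := R[i].

Definition lagrange_factor (j k : 'I_r) (z : 'I_n -> C) : C :=
  if [pick i | xi j i != xi k i] is Some i then (z i - xi k i) / (xi j i - xi k i)
  else 1.

Definition lagrange (j : 'I_r) (z : 'I_n -> C) : C :=
  \prod_(k | k != j) lagrange_factor j k z.

Lemma laurent_lagrange_factor j k : laurent 1 (lagrange_factor j k).
Proof.
rewrite /lagrange_factor; case: pickP => [i _|_]; last exact: laurent_cst.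
have := laurentM (laurent_coord i) (laurent_cst 0 (xi j i - xi k i)^-1).
rewrite addn0 => /laurentD /(_ (laurent_cst 1 (- xi k i / (xi j i - xi k i)))).
by apply: eq_laurent => z _; rewrite mulNr mulrBl.
Qed.

Lemma laurent_lagrange j : laurent r.-1 (lagrange j).
Proof.
have := laurent_prod (index_enum 'I_r) (predC1 j) (fun k => laurent_lagrange_factor j k).
by rewrite count_index_enum cardC1 card_ord mul1n.
Qed.

Hypothesis xi_inj : injective xi.

Lemma lagrange_xi j k : lagrange j (xi k) = (j == k)%:R.
Proof.
rewrite /lagrange /lagrange_factor; have [<-|jk] := eqVneq j k.
  by apply: big1 => l _; case: pickP => // i ne; rewrite divff // subr_eq0.
rewrite (bigD1 k) 1?eq_sym //=; case: pickP => [i _|same].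
  by rewrite subrr !mul0r.
by case/eqP: jk; apply: xi_inj; apply: funext => i; move/negbFE/eqP: (same i).
Qed.

Hypothesis xi_torus : forall j, torus (xi j).

Lemma interpolation_family : exists u : 'I_r -> lpoly R n r.-1,
  forall i j, lpoly_eval (u i) (xi j) = (i == j)%:R.
Proof.
have [u hu] := choice (fun j => laurent_lpoly (laurent_lagrange j)).
by exists u => i j; rewrite hu ?lagrange_xi.
Qed.

Local Open Scope classical_set_scope.

Let interp_maxima := [set M | exists u : 'I_r -> lpoly R n r.-1,
  (forall i j, lpoly_eval (u i) (xi j) = (i == j)%:R) /\
  M = \big[Num.max/0]_(i < r) torus_max2 (u i)].

Let interp_maxima_neq0 : interp_maxima !=set0.
Proof.
have [u hu] := interpolation_family.
by exists (\big[Num.max/0]_(i < r) torus_max2 (u i)); exists u.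
Qed.

Lemma interpE_ge1 : (0 < r)%N -> 1 <= interpE xi.
Proof.
move=> r_gt0; apply: lb_le_inf interp_maxima_neq0 _ => _ [u [hu ->]].
pose j : 'I_r := Ordinal r_gt0.
apply: le_trans (le_bigmax _ _ j); apply: le_trans (torus_max2_ge _ (xi_torus j)).
by rewrite hu eqxx cabs1 expr1n.
Qed.

(* The infimum defining [interpE] need not be attained, hence the slack [+ 1]. *)
Lemma interpE_approx : exists2 u : 'I_r -> lpoly R n r.-1,
  forall i j, lpoly_eval (u i) (xi j) = (i == j)%:R &
  forall j z, torus z -> cabs (lpoly_eval (u j) z) ^+ 2 <= interpE xi + 1.
Proof.
have lt1 : inf interp_maxima < interpE xi + 1 by rewrite ltrDl.
have [_ [u [hu ->]] ltM] := inf_lt interp_maxima_neq0 lt1.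
exists u => // j z tz; apply/ltW/(le_lt_trans _ ltM).
exact: le_trans (torus_max2_ge _ tz) (le_bigmax _ _ j).
Qed.

End Interpolation.

Section RootOfUnity.
Variables (R : realType) (N : nat).
Local Notation w := (omegaN R N).
Local Notation theta := (2 * pi / (N%:R : R)).

Lemma omegaN_expr k : w ^+ k = Complex (cos (k%:R * theta)) (sin (k%:R * theta)).
Proof.
elim: k => [|k IH]; first by rewrite expr0 mul0r cos0 sin0.
have -> : k.+1%:R * theta = k%:R * theta + theta by rewrite -natr1 mulrDl mul1r.
rewrite exprSr IH cosD sinD.
by congr Complex; rewrite addrC.
Qed.

Lemma cabs_omegaN_expr k : cabs (w ^+ k) = 1.
Proof. by rewrite omegaN_expr /cabs /= cos2Dsin2 sqrtr1. Qed.

(* [w ^+ k = 1] forces [cos (2 y) = 1] for [y = k pi / N] in [(0, pi)], where [sin y > 0]. *)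
Lemma omegaN_expr_neq1 k : (0 < k < N)%N -> w ^+ k != 1.
Proof.
move=> /andP[k_gt0 ltkN]; have N_gt0 : (0 < N)%N := ltn_trans k_gt0 ltkN.
rewrite omegaN_expr; apply/negP => /eqP [] cos1 _.
pose y : R := k%:R * pi / N%:R.
have ey : k%:R * theta = y *+ 2 by rewrite /y -mulr_natr; field; rewrite pnatr_eq0 -lt0n.
have sin_y_gt0 : 0 < sin y.
  apply: sin_gt0_pi; rewrite !mulr_gt0 ?invr_gt0 ?ltr0n ?pi_gt0 //=.
  by rewrite ltr_pdivrMr ?ltr0n // mulrC ltr_pM2l ?pi_gt0 ?ltr_nat.
move: cos1; rewrite ey cos_mulr2n => cos1.
have : sin y ^+ 2 = 0 by rewrite sin2cos2; move: cos1; rewrite -mulr_natr; lra.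
by move/eqP; rewrite expf_eq0 /= gt_eqF.
Qed.

Lemma omegaN_expr_inj a b : (a < N)%N -> (b < N)%N -> w ^+ a = w ^+ b -> a = b.
Proof.
wlog le_ab : a b / (a <= b)%N.
  by move=> hw aN bN e; case: (leqP a b) => [|/ltnW] h; [|apply/esym]; apply: hw.
move=> _ ltbN e; apply/eqP; rewrite eqn_leq le_ab leqNgt; apply/negP => lt_ab.
have wa_neq0 : w ^+ a != 0 by rewrite -cabs_eq0 cabs_omegaN_expr oner_neq0.
have /eqP : w ^+ (b - a) = 1 by apply: (mulfI wa_neq0); rewrite -exprD subnKC // mulr1.
by apply/negP/omegaN_expr_neq1; rewrite subn_gt0 lt_ab (leq_ltn_trans (leq_subr _ _)).
Qed.

End RootOfUnity.

Section Grid.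
Variables (R : realType) (n N : nat).
Local Notation w := (omegaN R N).
Local Notation box := {ffun 'I_n -> 'I_N}.

Lemma phipow_torus (beta : {ffun 'I_n -> nat}) : torus (phipow R N beta).
Proof. by move=> i; rewrite cabs_omegaN_expr. Qed.

Lemma phipow_inj (a b : {ffun 'I_n -> nat}) :
  (forall i, a i < N)%N -> (forall i, b i < N)%N -> phipow R N a = phipow R N b -> a = b.
Proof.
move=> aN bN e; apply/ffunP => i.
exact: (omegaN_expr_inj (aN i) (bN i) (congr1 (fun z => z i) e)).
Qed.

Definition box_exp (b : box) : {ffun 'I_n -> nat} := [ffun i => val (b i)].

Lemma box_exp_inj : injective box_exp.
Proof.
move=> b1 b2 /ffunP e; apply/ffunP => i; apply: val_inj.
by have := e i; rewrite !ffunE.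
Qed.

Lemma box_exp_lt b i : (box_exp b i < N)%N.
Proof. by rewrite /box_exp ffunE ltn_ord. Qed.

Lemma LPmat_lmono alpha b : LPmat R alpha b = lmono (phipow R N (box_exp b)) alpha.
Proof. by apply: eq_bigr => i _; rewrite /phipow ffunE -exprz_exp. Qed.

Lemma phipowz_LPmat alpha b :
  \prod_(i < n) phipowz R N alpha i ^+ box_exp b i = LPmat R alpha b.
Proof. by apply: eq_bigr => i _; rewrite ffunE [in RHS]mulrC -exprz_exp. Qed.

End Grid.

Lemma dual_certificate_l1_lt (R : realDomainType) (I : finType) (v x0 x : I -> R) i0 :
  (forall i, v i * x0 i = `|x0 i|) -> (forall i, `|v i| <= 1) ->
  `|v i0| < 1 -> x i0 != x0 i0 -> \sum_i v i * (x i - x0 i) = 0 ->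
  \sum_i `|x0 i| < \sum_i `|x i|.
Proof.
move=> vx0 v_le1 vi0_lt1 x_neq dual.
have x0i0 : x0 i0 = 0.
  apply: contraTeq vi0_lt1 => nz.
  have e : `|v i0| * `|x0 i0| = 1 * `|x0 i0| by rewrite mul1r -normrM vx0 normr_id.
  by rewrite (mulIf _ e) ?normr_eq0 // ltxx.
have le_i i : `|x0 i| + v i * (x i - x0 i) <= `|x i|.
  rewrite mulrBr vx0 addrC subrK; apply: le_trans (ler_norm _) _.
  by rewrite normrM ler_piMl.
have lt_i0 : `|x0 i0| + v i0 * (x i0 - x0 i0) < `|x i0|.
  rewrite x0i0 normr0 add0r subr0; apply: le_lt_trans (ler_norm _) _.
  by rewrite normrM gtr_pMl // normr_gt0 -x0i0.
rewrite -[ltLHS]addr0 -[X in _ + X]dual -big_split /= (bigD1 i0) // [ltRHS](bigD1 i0) //=.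
by rewrite ltr_leD // ler_sum.
Qed.

Section LinearProgram.
Variables (R : realType) (n N d : nat).
Local Notation C := R[i].
Local Notation box := {ffun 'I_n -> 'I_N}.
Local Notation node b := (phipow R N (@box_exp n N b)).

Definition LPkernel (h : box -> R) := forall alpha : 'I_n -> int,
  (forall i, `|alpha i| <= d%:Z) -> \sum_b LPmat R alpha b * (h b)%:C = 0.

Lemma LPfeasible_kernel rhs x x0 :
  LPfeasible d rhs x -> LPfeasible d rhs x0 -> LPkernel (fun b => x b - x0 b).
Proof.
move=> hx hx0 alpha ha; under eq_bigr do rewrite rmorphB mulrBr.
by rewrite sumrB hx // hx0 // subrr.
Qed.

Lemma LPkernel_laurent h f :
  LPkernel h -> laurent d f -> \sum_b f (node b) * (h b)%:C = 0.
Proof.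
move=> ker [L hL fL].
have fLb b : f (node b) = \sum_(p <- L) p.1 * lmono (node b) p.2.
  exact/fL/phipow_torus.
under eq_bigr do rewrite fLb big_distrl.
rewrite exchange_big /=; elim: L hL {fL fLb} => [|p L IH]; first by rewrite big_nil.
move=> /andP[hp /IH {}IH]; rewrite big_cons IH addr0.
under eq_bigr do rewrite -mulrA -LPmat_lmono.
rewrite -big_distrr /= ker ?mulr0 // => i.
by rewrite -abszE lez_nat (leq_trans (absz_le_l1deg _ _) hp).
Qed.

Lemma LPunique_opt_of_certificate rhs (x0 : box -> R) (S : pred box) (F : ('I_n -> C) -> R) :
  LPfeasible d rhs x0 ->
  (forall h, LPkernel h -> (forall b, ~~ S b -> h b = 0) -> h = 0) ->
  laurent d (fun z => (F z)%:C) ->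
  (forall b, F (node b) * x0 b = `|x0 b|) ->
  (forall b, `|F (node b)| <= 1) ->
  (forall b, ~~ S b -> `|F (node b)| < 1) ->
  LPunique_opt d rhs x0.
Proof.
move=> feas0 S_free F_laurent Fx0 F_le1 F_lt1; split => // x feas x_neq.
have ker := LPfeasible_kernel feas feas0.
have [b0 /andP[/F_lt1 Fb0 xb0]|same] := pickP [pred b | ~~ S b && (x b != x0 b)].
  apply: dual_certificate_l1_lt Fx0 F_le1 Fb0 xb0 _; apply: complexI.
  rewrite rmorph_sum -[RHS](LPkernel_laurent ker F_laurent).
  by apply: eq_bigr => b _; rewrite rmorphM.
have x_x0 : (fun b => x b - x0 b) = 0.
  apply: S_free ker _ => c nSc; apply/eqP; rewrite subr_eq0.
  by move: (same c); rewrite /= nSc => /negbFE.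
case: x_neq; apply: funext => b; apply/eqP; rewrite -subr_eq0; apply/eqP.
exact: (congr1 (fun h => h b) x_x0).
Qed.

End LinearProgram.

Lemma amgm_base_ge0 (R : realFieldType) (m : nat) (s : R) :
  (0 < m)%N -> s <= m.+1%:R -> 0 <= 1 + (1 - s) / m%:R.
Proof.
move=> m_gt0 s_le; have m_neq0 : (m%:R : R) != 0 by rewrite pnatr_eq0 -lt0n.
have -> : 1 + (1 - s) / m%:R = (m.+1%:R - s) / m%:R by rewrite -natr1; field.
by rewrite divr_ge0 ?subr_ge0.
Qed.

Lemma amgm_pow_le1 (R : realType) (m : nat) (s : R) :
  (0 < m)%N -> 0 <= s -> s <= m.+1%:R -> s * (1 + (1 - s) / m%:R) ^+ m <= 1.
Proof.
move=> m_gt0 s_ge0 s_le; have m_gt0' : (0 : R) < m%:R by rewrite ltr0n.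
set x := (1 - s) / m%:R.
have sx : s = 1 + - (m%:R * x) by rewrite /x mulrC divfK ?gt_eqF // subKr.
have x_ge : 0 <= 1 + x by exact: amgm_base_ge0.
have le_s : s <= expR (- (m%:R * x)) by rewrite {1}sx expR_ge1Dx.
have le_pow : (1 + x) ^+ m <= expR (m%:R * x).
  by rewrite expRM_natl lerXn2r ?nnegrE ?expR_ge0 ?expR_ge1Dx.
apply: le_trans (ler_pM s_ge0 (exprn_ge0 _ x_ge) le_s le_pow) _.
by rewrite mulrC expRxMexpNx_1.
Qed.

Section DualCertificate.
Variables (R : realType) (n r D m : nat).
Variables (xi : 'I_r -> 'I_n -> R[i]) (u : 'I_r -> ('I_n -> R[i]) -> R[i]) (s : 'I_r -> R).
Hypotheses (xi_torus : forall j, torus (xi j)) (u_laurent : forall j, laurent D (u j))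
  (u_xi : forall j k, u j (xi k) = (j == k)%:R) (s_le1 : forall j, `|s j| <= 1)
  (m_gt0 : (0 < m)%N)
  (sumsq_le : forall z, torus z -> \sum_j cabs (u j z) ^+ 2 <= m.+1%:R).
Local Notation C := R[i].
Implicit Types z : 'I_n -> C.

Definition sumsq z := \sum_j cabs (u j z) ^+ 2.

Definition weight z := \sum_j s j * cabs (u j z) ^+ 2.
Definition damping z := (1 + (1 - sumsq z) / m%:R) ^+ m.
Definition dist2_prod z := \prod_j \sum_i cabs (z i - xi j i) ^+ 2.
(* Squared distances between points of the torus are at most 4, whence the constant. *)
Definition separation z := 1 - ((4 * n).+1%:R ^+ r)^-1 * dist2_prod z.
Definition certificate z := weight z * damping z * separation z.

Lemma laurent_sumsq : laurent (D + D) (fun z => (sumsq z)%:C).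
Proof.
apply: eq_laurent (laurent_sum _ xpredT (fun j => laurent_mul_conj (u_laurent j))).
by move=> z _; rewrite rmorph_sum.
Qed.

Lemma laurent_weight : laurent (D + D) (fun z => (weight z)%:C).
Proof.
have := laurent_sum (index_enum 'I_r) xpredT
  (fun j => laurentM (laurent_cst 0 (s j)%:C) (laurent_mul_conj (u_laurent j))).
rewrite add0n; apply: eq_laurent => z _; rewrite /weight rmorph_sum.
by apply: eq_bigr => j _; rewrite [RHS]rmorphM.
Qed.

Lemma laurent_damping : laurent ((D + D) * m) (fun z => (damping z)%:C).
Proof.
have := laurentD (laurent_cst _ (1 + (m%:R)^-1))
  (laurentM (laurent_cst 0 (- (m%:R)^-1)) laurent_sumsq).
move/(laurentX m); apply: eq_laurent => z _.
rewrite rmorphXn rmorphD rmorphM rmorphB fmorphV !rmorph1 rmorph_nat; congr (_ ^+ _).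
by rewrite mulrBl mul1r mulNr addrA [_ * _]mulrC.
Qed.

Lemma laurent_separation : laurent (2 * r) (fun z => (separation z)%:C).
Proof.
have dist i j : laurent 1 (fun z => z i - xi j i).
  exact: laurentD (laurent_coord i) (laurent_cst _ _).
have := laurent_prod (index_enum 'I_r) xpredT
  (fun j => laurent_sum (index_enum 'I_n) xpredT (fun i => laurent_mul_conj (dist i j))).
rewrite count_index_enum card_ord => /(laurentM (laurent_cst 0 (- ((4 * n).+1%:R ^+ r)^-1)%:C)).
move/(laurentD (laurent_cst _ 1)); apply: eq_laurent => z _.
rewrite rmorphB rmorph1 rmorphM -mulNr rmorph_prod; congr (_ + _ * _).
  exact: rmorphN.
by apply: eq_bigr => j _; rewrite rmorph_sum.
Qed.

Lemma laurent_certificate :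
  laurent (2 * D * m.+1 + 2 * r) (fun z => (certificate z)%:C).
Proof.
have := laurentM (laurentM laurent_weight laurent_damping) laurent_separation.
have -> : (D + D + (D + D) * m + 2 * r = 2 * D * m.+1 + 2 * r)%N by ring.
by apply: eq_laurent => z _; rewrite !rmorphM.
Qed.

Lemma certificate_xi k : certificate (xi k) = s k.
Proof.
have u2 j : cabs (u j (xi k)) ^+ 2 = (j == k)%:R.
  by rewrite u_xi; case: eqP; rewrite ?cabs1 ?cabs0 ?expr1n ?expr0n.
have sumsq1 : sumsq (xi k) = 1.
  by rewrite /sumsq (bigD1 k) //= big1 ?u2 ?eqxx ?addr0 // => j /negbTE; rewrite u2 => ->.
have dist0 : dist2_prod (xi k) = 0.
  by rewrite /dist2_prod (bigD1 k) //= big1 ?mul0r // => i _; rewrite subrr cabs0 expr0n.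
rewrite /certificate /damping /separation sumsq1 dist0 subrr mul0r addr0 expr1n.
rewrite mulr0 subr0 !mulr1 /weight (bigD1 k) //= big1 ?u2 ?eqxx ?mulr1 ?addr0 //.
by move=> j /negbTE; rewrite u2 => ->; rewrite mulr0.
Qed.

Lemma dist2_prod_ge0 z : 0 <= dist2_prod z.
Proof. by apply/prodr_ge0 => j _; apply/sumr_ge0 => i _; rewrite exprn_ge0 ?cabs_ge0. Qed.

Lemma dist2_prod_gt0 z : (forall j, z <> xi j) -> 0 < dist2_prod z.
Proof.
move=> z_neq; apply: prodr_gt0 => j _.
have [i zi|same] := pickP (fun i => z i != xi j i); last first.
  by case: (z_neq j); apply: funext => i; apply/eqP/negbFE/same.
rewrite (bigD1 i) //= ltr_pwDl ?sumr_ge0 // => [|i' _]; last by rewrite exprn_ge0 ?cabs_ge0.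
by rewrite exprn_gt0 // lt0r cabs_ge0 cabs_eq0 subr_eq0 zi.
Qed.

Lemma dist2_prod_le z : torus z -> dist2_prod z <= (4 * n).+1%:R ^+ r.
Proof.
move=> tz; have term i j : cabs (z i - xi j i) ^+ 2 <= 4.
  have : cabs (z i - xi j i) <= 2 by rewrite (le_trans (cabsD _ _)) // cabsN tz xi_torus.
  by have := cabs_ge0 (z i - xi j i); nra.
apply: (@le_trans _ _ (\prod_(j < r) (4 * n)%:R)).
  apply: ler_prod => j _; rewrite sumr_ge0 => [|i _]; last by rewrite exprn_ge0 ?cabs_ge0.
  by rewrite natrM mulr_natr -[X in _ *+ X]card_ord -sumr_const ler_sum.
by rewrite prodr_const card_ord lerXn2r ?nnegrE ?ler_nat.
Qed.

Lemma separation_ge0 z : torus z -> 0 <= separation z.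
Proof.
move=> tz; rewrite subr_ge0 mulrC ler_pdivrMr ?exprn_gt0 // mul1r.
exact: dist2_prod_le.
Qed.

Lemma certificate_le_separation z : torus z -> `|certificate z| <= separation z.
Proof.
move=> tz; have sumsq_ge0 : 0 <= sumsq z by rewrite sumr_ge0 // => j _; rewrite exprn_ge0 ?cabs_ge0.
have damping_ge0 : 0 <= damping z.
  by rewrite exprn_ge0 // amgm_base_ge0 ?sumsq_le.
rewrite /certificate !normrM (ger0_norm damping_ge0) (ger0_norm (separation_ge0 tz)).
rewrite -[leRHS]mul1r ler_wpM2r ?separation_ge0 //.
apply: le_trans (amgm_pow_le1 m_gt0 sumsq_ge0 (sumsq_le tz)); rewrite ler_wpM2r //.
apply: le_trans (ler_norm_sum _ _ _) _; apply: ler_sum => j _.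
by rewrite normrM (ger0_norm (exprn_ge0 2 (cabs_ge0 _))) ler_piMl ?exprn_ge0 ?cabs_ge0.
Qed.

Lemma certificate_le1 z : torus z -> `|certificate z| <= 1.
Proof.
move=> tz; apply: le_trans (certificate_le_separation tz) _.
by rewrite lerBlDr lerDl mulr_ge0 ?dist2_prod_ge0.
Qed.

Lemma certificate_lt1 z : torus z -> (forall j, z <> xi j) -> `|certificate z| < 1.
Proof.
move=> tz z_neq; apply: le_lt_trans (certificate_le_separation tz) _.
by rewrite ltrBlDr ltrDl mulr_gt0 ?dist2_prod_gt0 ?invr_gt0 ?exprn_gt0.
Qed.

End DualCertificate.

Section Support.
Variables (R : realType) (n N d r : nat) (Gamma : seq {ffun 'I_n -> nat}).
Hypotheses (Gamma_uniq : uniq Gamma) (size_Gamma : size Gamma = r)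
  (Gamma_lt : forall beta, beta \in Gamma -> forall i, (beta i < N)%N).
Local Notation C := R[i].
Local Notation box := {ffun 'I_n -> 'I_N}.
Local Notation node b := (phipow R N (@box_exp n N b)).
Local Notation xi j := (phipow R N (nth [ffun => 0%N] Gamma j)).

Lemma mem_nth_Gamma (j : 'I_r) : nth [ffun => 0%N] Gamma j \in Gamma.
Proof. by rewrite mem_nth ?size_Gamma. Qed.

Lemma phipow_nth_inj : injective (fun j : 'I_r => xi j).
Proof.
move=> j k e; apply/val_inj/eqP.
rewrite -(nth_uniq [ffun => 0%N] _ _ Gamma_uniq) ?size_Gamma ?ltn_ord //.
by apply/eqP/(phipow_inj _ _ e) => [i|i]; apply: Gamma_lt (mem_nth_Gamma _) i.
Qed.

Lemma box_exp_nth (b : box) : box_exp b \in Gamma ->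
  exists j : 'I_r, nth [ffun => 0%N] Gamma j = box_exp b.
Proof.
move=> bG; have jr : (index (box_exp b) Gamma < r)%N by rewrite -size_Gamma index_mem.
by exists (Ordinal jr); rewrite nth_index.
Qed.

Lemma phipow_box_exp_neq_nth (b : box) (j : 'I_r) : box_exp b \notin Gamma -> node b <> xi j.
Proof.
move=> bG e; case/negP: bG; rewrite (phipow_inj _ _ e) ?mem_nth_Gamma // => i.
  exact: box_exp_lt.
exact: Gamma_lt (mem_nth_Gamma _) i.
Qed.

Lemma sum_box_Gamma (F : {ffun 'I_n -> nat} -> C) :
  (forall beta, beta \notin Gamma -> F beta = 0) ->
  \sum_(b : box) F (box_exp b) = \sum_(beta <- Gamma) F beta.
Proof.
move=> F0; rewrite (bigID (fun b => box_exp b \in Gamma)) /= [X in _ + X]big1 ?addr0;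
  last by move=> b /F0.
rewrite -big_filter -(big_map (@box_exp n N) xpredT F); apply/perm_big/uniq_perm => //.
  by rewrite map_inj_uniq ?filter_uniq ?index_enum_uniq //; exact: box_exp_inj.
move=> beta; apply/mapP/idP => [[b]|betaG]; first by rewrite mem_filter => /andP[? _] ->.
pose b : box := [ffun i => Ordinal (Gamma_lt betaG i)].
have bbeta : box_exp b = beta by apply/ffunP => i; rewrite !ffunE.
by exists b; rewrite ?mem_filter bbeta ?betaG ?mem_index_enum.
Qed.

Lemma coef_box_feasible (g : {ffun 'I_n -> nat} -> R) :
  (forall beta, beta \notin Gamma -> g beta = 0) ->
  LPfeasible d (fun alpha => rpoly_eval Gamma g (phipowz R N alpha)) (@coef_box R n N g).
Proof.
move=> g0 alpha _; rewrite /rpoly_eval -sum_box_Gamma => [|beta /g0 ->]; last first.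
  by rewrite mul0r.
by apply: eq_bigr => b _; rewrite phipowz_LPmat mulrC.
Qed.

Lemma LPkernel_supp_Gamma (h : box -> R) : (r.-1 <= d)%N -> LPkernel d h ->
  (forall b, box_exp b \notin Gamma -> h b = 0) -> h = 0.
Proof.
move=> le_rd ker h0; apply/funext => b0.
have [/box_exp_nth [k hk]|/h0 //] := boolP (box_exp b0 \in Gamma).
have := LPkernel_laurent ker (laurentW le_rd (laurent_lagrange (fun j => xi j) k)).
rewrite (bigD1 b0) //= big1 => [|b ne_b]; last first.
  have [/box_exp_nth [j hj]|/h0 ->] := boolP (box_exp b \in Gamma); last by rewrite mulr0.
  rewrite -hj lagrange_xi; last exact: phipow_nth_inj.
  suff /negbTE -> : k != j by rewrite mul0r.
  by apply: contraNneq ne_b => kj; apply/eqP/box_exp_inj; rewrite -hk -hj kj.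
rewrite -hk lagrange_xi ?eqxx ?mul1r ?addr0; last exact: phipow_nth_inj.
by move/(congr1 (@complex.Re R)).
Qed.

Lemma coef_box_LPunique_opt (g : {ffun 'I_n -> nat} -> R) (D m : nat)
    (u : 'I_r -> ('I_n -> C) -> C) :
  (forall beta, (beta \in Gamma) = (g beta != 0)) ->
  (forall j, laurent D (u j)) -> (forall j k : 'I_r, u j (xi k) = (j == k)%:R) ->
  (0 < m)%N -> (forall z, torus z -> \sum_j cabs (u j z) ^+ 2 <= m.+1%:R) ->
  (2 * D * m.+1 + 2 * r <= d)%N ->
  LPunique_opt d (fun alpha => rpoly_eval Gamma g (phipowz R N alpha)) (@coef_box R n N g).
Proof.
move=> Gamma_g u_laurent u_xi m_gt0 sumsq_le deg.
have g0 beta : beta \notin Gamma -> g beta = 0 by rewrite Gamma_g negbK => /eqP.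
pose s j := Num.sg (g (nth [ffun => 0%N] Gamma j)).
have s_le1 j : `|s j| <= 1 by rewrite normr_sg; case: (_ != 0).
have xi_torus j : torus (xi j) by apply: phipow_torus.
apply: (LPunique_opt_of_certificate (S := fun b => box_exp b \in Gamma)
         (F := certificate m (fun j => xi j) u s)).
- exact: coef_box_feasible.
- by move=> h; apply: LPkernel_supp_Gamma; apply: leq_trans deg; lia.
- exact: laurentW deg (laurent_certificate _ _ _ u_laurent).
- move=> b; rewrite /coef_box -/(box_exp b).
  have [/box_exp_nth [k <-]|/g0 ->] := boolP (box_exp b \in Gamma).
    by rewrite (certificate_xi _ _ u_xi) [RHS]normrEsg.
  by rewrite normr0; apply: mulr0.
- by move=> b; apply: certificate_le1 => //; apply: phipow_torus.
- move=> b bG; apply: certificate_lt1 => //; first exact: phipow_torus.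
  by move=> j; apply: phipow_box_exp_neq_nth.
Qed.

End Support.

Lemma recovery_degree_le (R : realType) (r d : nat) (E : R) :
  ((0 < r)%N -> 1 <= E) -> ((2 * r + 2) ^ 2)%:R * E <= d%:R ->
  (2 * r.-1 * (Num.truncn (r%:R * (E + 1))).+2 + 2 * r <= d)%N.
Proof.
case: r => [|r] E_ge1 hd; first by rewrite !muln0.
have {}E_ge1 := E_ge1 isT; set t := Num.truncn _.
have t_le : t%:R <= r.+1%:R * (E + 1).
  by rewrite truncn_le mulr_ge0 ?addr_ge0 // (le_trans ler01).
apply: (@leq_trans (2 * r.+1 * t.+2 + 2 * r.+1)); first by nia.
rewrite -(ler_nat R); apply: le_trans hd; move: t_le.
rewrite -addn2 !(natrD, natrM, natrX); set x : R := r.+1%:R; set y : R := t%:R.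
have x_ge1 : 1 <= x by rewrite ler1n.
move=> y_le; have xy : x * y <= x * x * (E + 1) by rewrite -mulrA ler_wpM2l // (le_trans ler01).
have : 0 <= x * x * (E - 1) by rewrite mulr_ge0 ?subr_ge0 ?mulr_ge0 // (le_trans ler01).
have : 0 <= x * (E - 1) by rewrite mulr_ge0 ?subr_ge0 // (le_trans ler01).
nra.
Qed.

Unset Implicit Arguments. Set Strict Implicit.

Theorem proposition3p8 (R : realType) (r : nat) :
  exists C : R, 0 < C /\
  forall (n N d : nat) (Gamma : seq {ffun 'I_n -> nat})
         (g : {ffun 'I_n -> nat} -> R),
    uniq Gamma ->
    (forall beta, (beta \in Gamma) = (g beta != 0)) ->
    size Gamma = r ->
    (forall beta, beta \in Gamma -> forall i, (beta i < N)%N) ->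
    C * interpE (fun j : 'I_r => phipow R N (nth [ffun => 0%N] Gamma j))
      <= d%:R ->
    LPunique_opt d (fun alpha => rpoly_eval Gamma g (phipowz R N alpha))
                 (@coef_box R n N g).
Proof.
exists ((2 * r + 2) ^ 2)%:R; split => [|n N d Gamma g Gamma_uniq Gamma_g size_Gamma Gamma_lt hd].
  by rewrite ltr0n expn_gt0 addn2.
have xi_inj := phipow_nth_inj (R := R) Gamma_uniq size_Gamma Gamma_lt.
have xi_torus j : torus (phipow R N (nth [ffun => 0%N] Gamma j)) by apply: phipow_torus.
have [u u_xi u_le] := interpE_approx xi_inj xi_torus.
have deg := recovery_degree_le (interpE_ge1 xi_inj xi_torus) hd.
set E := interpE _ in u_le deg.
(* [deg] fixes the exponent [m := (truncn (r (E + 1))).+1 > r (E + 1)]. *)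
apply: (coef_box_LPunique_opt Gamma_uniq size_Gamma Gamma_lt Gamma_g
          (fun j => laurent_lpoly_eval (u j)) u_xi _ _ deg) => // z tz.
apply: (@le_trans _ _ (r%:R * (E + 1))).
  by rewrite -[X in X%:R * _]card_ord mulr_natl -sumr_const ler_sum // => j _; apply: u_le.
by apply/ltW/(lt_le_trans (real_truncnS_gt (num_real _))); rewrite ler_nat.
Qed.
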